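(* Let $n\ge0$. If a variety $\mathcal V$ has $n+2$ Gumm terms, then $\mathcal V$ is $(2n+2)$-modular, i.e. it satisfies $\alpha(\beta\circ\alpha\gamma\circ\beta)\subseteq\alpha\beta\circ_{2n+2}\alpha\gamma$ for all congruences $\alpha,\beta,\gamma$.
   Context: $\circ$ is relational composition, juxtaposition is intersection. For relations $X,Y$ and $m\ge1$, $X\circ_m Y$ denotes $X\circ Y\circ X\circ\cdots$ with $m$ factors. A variety has $n+2$ Gumm terms if it has ternary terms $p,j_1,\dots,j_{n+1}$ satisfying: $x=j_i(x,y,x)$ for all $i$; $x=p(x,z,z)$; $p(x,x,z)=j_1(x,x,z)$; $j_i(x,z,z)=j_{i+1}(x,z,z)$ for odd $i\le n$; $j_i(x,x,z)=j_{i+1}(x,x,z)$ for even $i\le n$; $j_{n+1}(x,y,z)=z$. *)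

From mathcomp Require Import all_boot.
Set Implicit Arguments. Unset Strict Implicit. Unset Printing Implicit Defensive.

Record signature := Signature { op_sym : Type; arity : op_sym -> nat }.

Inductive term (S : signature) (X : Type) : Type :=
  | tvar : X -> term S X
  | tapp : forall f : op_sym S, ('I_(arity f) -> term S X) -> term S X.
Arguments tvar {S X}.
Arguments tapp {S X}.

Record algebra (S : signature) := Algebra {
  carrier :> Type;
  interp : forall f : op_sym S, ('I_(arity f) -> carrier) -> carrier }.

Fixpoint eval (S : signature) (A : algebra S) (X : Type) (v : X -> A)
  (t : term S X) : A :=
  match t with
  | tvar x => v x
  | tapp f args => @interp S A f (fun i => eval v (args i))
  end.

Definition equation (S : signature) := (term S nat * term S nat)%type.

(* A variety, given (by Birkhoff's theorem) by a set of defining identities. *)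
Definition variety (S : signature) := equation S -> Prop.

Definition in_variety (S : signature) (V : variety S) (A : algebra S) : Prop :=
  forall e, V e -> forall v : nat -> A, eval v e.1 = eval v e.2.

(* Ternary terms: terms in the variables x, y, z (indexed 0, 1, 2). *)
Definition tterm (S : signature) := term S 'I_3.

Definition val3 (T : Type) (a b c : T) : 'I_3 -> T :=
  fun i => match val i with 0 => a | 1 => b | _ => c end.

Definition top3 (S : signature) (A : algebra S) (t : tterm S) (a b c : A) : A :=
  eval (val3 a b c) t.
Arguments top3 {S} A t a b c.

Definition holds3 (S : signature) (V : variety S) (s t : tterm S) : Prop :=
  forall A : algebra S, in_variety V A ->
    forall a b c : A, top3 A s a b c = top3 A t a b c.

(* p, j_1, ..., j_{n+1} are n+2 Gumm terms for V (j indexed by 1..n+1). *)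
Definition gumm_terms (S : signature) (V : variety S) (n : nat)
  (p : tterm S) (j : nat -> tterm S) : Prop :=
  (forall i, 1 <= i <= n.+1 -> forall A : algebra S, in_variety V A ->
          forall x y : A, x = top3 A (j i) x y x) /\
  [/\ (forall A : algebra S, in_variety V A ->
          forall x z : A, x = top3 A p x z z),
      (forall A : algebra S, in_variety V A ->
          forall x z : A, top3 A p x x z = top3 A (j 1) x x z),
      (forall i, 1 <= i <= n -> odd i -> forall A : algebra S, in_variety V A ->
          forall x z : A, top3 A (j i) x z z = top3 A (j i.+1) x z z),
      (forall i, 1 <= i <= n -> ~~ odd i -> forall A : algebra S, in_variety V A ->
          forall x z : A, top3 A (j i) x x z = top3 A (j i.+1) x x z)
    & (forall A : algebra S, in_variety V A ->
          forall x y z : A, top3 A (j n.+1) x y z = z)].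

Definition has_gumm_terms (S : signature) (V : variety S) (n : nat) : Prop :=
  exists p j, gumm_terms V n p j.

Definition relA (T : Type) := T -> T -> Prop.

Definition is_congruence {S : signature} (A : algebra S) (R : relA A) : Prop :=
  [/\ (forall a, R a a), (forall a b, R a b -> R b a),
      (forall a b c, R a b -> R b c -> R a c)
    & (forall f (u w : 'I_(arity f) -> A),
         (forall i, R (u i) (w i)) -> R (@interp S A f u) (@interp S A f w))].

Definition rcomp (T : Type) (X Y : relA T) : relA T :=
  fun a c => exists b, X a b /\ Y b c.

Definition rmeet (T : Type) (X Y : relA T) : relA T := fun a b => X a b /\ Y a b.

(* X o_m Y = X o Y o X o ... with m factors (m >= 1); m = 0 gives equality. *)
Fixpoint rcomp_alt (T : Type) (m : nat) (X Y : relA T) : relA T :=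
  match m with
  | 0 => fun a b => a = b
  | 1 => X
  | m'.+1 => rcomp X (rcomp_alt m' Y X)
  end.

Definition rsub (T : Type) (X Y : relA T) : Prop := forall a b, X a b -> Y a b.

Definition k_modular (S : signature) (V : variety S) (k : nat) : Prop :=
  forall A : algebra S, in_variety V A ->
  forall alpha beta gamma : relA A,
    is_congruence alpha -> is_congruence beta -> is_congruence gamma ->
    rsub (rmeet alpha (rcomp beta (rcomp (rmeet alpha gamma) beta)))
         (rcomp_alt k (rmeet alpha beta) (rmeet alpha gamma)).

(** Let a alpha c, a beta d, d alpha gamma e and e beta c.  Every point j_i(c, u, a) is
    alpha-related to c since j_i(c, u, c) = c.  With w_i := d for odd i and w_i := e for even i,
      a = j_{n+1}(c, w_n, a), j_n(c, w_n, a), j_n(c, w_{n-1}, a), ..., j_1(c, w_0, a), p(c, e, d), c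
    is an alternating alpha beta / alpha gamma chain of length 2n+2: points with the same j_i
    differ by d alpha gamma e, and the Gumm identities j_i(x,z,z) = j_{i+1}(x,z,z) (i odd),
    j_i(x,x,z) = j_{i+1}(x,x,z) (i even) and p(x,x,z) = j_1(x,x,z) link the remaining ones
    modulo beta, through a beta d and e beta c. *)
From mathcomp Require Import all_boot.

Set Implicit Arguments.
Unset Strict Implicit.
Unset Printing Implicit Defensive.

Section Congruences.
Variables (S : signature) (A : algebra S).
Implicit Types R Q : relA A.

Lemma cong_refl R : is_congruence R -> forall x, R x x.
Proof. by case. Qed.

Lemma cong_sym R : is_congruence R -> forall x y, R x y -> R y x.
Proof. by case. Qed.

Lemma cong_trans R : is_congruence R -> forall x y z, R x y -> R y z -> R x z.
Proof. by case. Qed.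

Lemma rmeet_congruence R Q :
  is_congruence R -> is_congruence Q -> is_congruence (rmeet R Q).
Proof.
case=> Rr Rs Rt Rc [Qr Qs Qt Qc]; split.
- by move=> x; split.
- by move=> x y [] /Rs ? /Qs.
- by move=> x y z [] /Rt Rxy /Qt Qxy [] /Rxy ? /Qxy.
- by move=> f u w Huw; split; [apply: Rc | apply: Qc] => i; case: (Huw i).
Qed.

Lemma eval_cong R (X : Type) (v v' : X -> A) (t : term S X) :
  is_congruence R -> (forall x, R (v x) (v' x)) -> R (eval v t) (eval v' t).
Proof. by case=> _ _ _ Rc Rvv'; elim: t => [x | f args IH] //=; apply: Rc. Qed.

Lemma top3_cong R (t : tterm S) x y z x' y' z' :
  is_congruence R -> R x x' -> R y y' -> R z z' ->
  R (top3 A t x y z) (top3 A t x' y' z').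
Proof. by move=> HR Rx Ry Rz; apply: eval_cong => // -[[|[|k]] ?]. Qed.

End Congruences.

Lemma rcomp_alt_cons2 (T : Type) (X Y : relA T) m a x y b :
  X a x -> Y x y -> rcomp_alt m X Y y b -> rcomp_alt m.+2 X Y a b.
Proof.
case: m => [|m] Xax Yxy Hyb; exists x; split=> //=; first by rewrite -Hyb.
by exists y.
Qed.

Section GummChain.
Variables (S : signature) (V : variety S) (n : nat) (p : tterm S) (j : nat -> tterm S).
Hypothesis gumm : gumm_terms V n p j.
Variables (A : algebra S) (alpha beta gamma : relA A).
Hypotheses (HA : in_variety V A) (Calpha : is_congruence alpha)
  (Cbeta : is_congruence beta) (Cgamma : is_congruence gamma).
Variables a c d e : A.
Hypotheses (alpha_ac : alpha a c) (beta_ad : beta a d)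
  (alpha_gamma_de : rmeet alpha gamma d e) (beta_ec : beta e c).

Local Notation ab := (rmeet alpha beta).
Local Notation ag := (rmeet alpha gamma).
Local Notation J i u := (top3 A (j i) c u a).

Let w i := if odd i then d else e.

Let Cag : is_congruence ag := rmeet_congruence Calpha Cgamma.

Lemma alpha_gumm_point i u : 1 <= i <= n.+1 -> alpha (J i u) c.
Proof.
have alpha_refl := cong_refl Calpha.
case: gumm => idem _ Hi; rewrite {2}(idem i Hi A HA c u).
by apply: top3_cong => //; apply: (cong_sym Calpha).
Qed.

Lemma ag_gumm_point i : 1 <= i <= n.+1 -> ag (J i (w i)) (J i (w i.-1)).
Proof.
move=> Hi; have [ag_de ag_ed] : ag d e /\ ag e d.
  by split; last apply: cong_sym.
have ag_refl := cong_refl Cag.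
case: i Hi => [|i] // _; rewrite /w /=.
by case: (odd i); apply: top3_cong.
Qed.

Lemma ab_gumm_step i : 1 <= i <= n -> ab (J i.+1 (w i)) (J i (w i)).
Proof.
move=> Hi; have [Hi1 Hi2] : 1 <= i <= n.+1 /\ 1 <= i.+1 <= n.+1.
  by case/andP: Hi => -> Hin; rewrite leqW.
split.
  apply: (cong_trans Calpha (alpha_gumm_point _ Hi2)).
  exact/(cong_sym Calpha)/alpha_gumm_point.
have beta_refl := cong_refl Cbeta; have beta_sym := cong_sym Cbeta.
case: gumm => _ [_ _ Hodd Heven _]; rewrite /w.
case odd_i: (odd i).
- apply: (cong_trans Cbeta (y := J i.+1 a)); first by apply: top3_cong; auto.
  rewrite -(Hodd i Hi odd_i A HA c a); exact: top3_cong.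
- apply: (cong_trans Cbeta (y := J i.+1 c)); first exact: top3_cong.
  rewrite -(Heven i Hi (negbT odd_i) A HA c a); apply: top3_cong; auto.
Qed.

Lemma gumm_chain_start : rcomp_alt 2 ab ag (J 1 e) c.
Proof.
case: gumm => _ [Hpzz Hpxx _ _ _].
have ag_pc : ag (top3 A p c e d) c.
  have ag_refl := cong_refl Cag.
  by rewrite {2}(Hpzz A HA c d); apply: top3_cong => //; apply: (cong_sym Cag).
apply: (rcomp_alt_cons2 (m := 0) _ ag_pc) => //; split.
  apply: (cong_trans Calpha (alpha_gumm_point _ _)) => //.
  by apply: (cong_sym Calpha); case: ag_pc.
have beta_refl := cong_refl Cbeta.
apply: (cong_trans Cbeta (y := J 1 c)); first exact: top3_cong.
rewrite -(Hpxx A HA c a); apply: top3_cong => //; exact: cong_sym.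
Qed.

Lemma gumm_chain i : 1 <= i <= n.+1 -> rcomp_alt i.*2 ab ag (J i (w i.-1)) c.
Proof.
elim: i => [|[|i] IH] //= Hi; first exact: gumm_chain_start.
have Hi' : 1 <= i.+1 <= n by [].
apply: rcomp_alt_cons2 (ab_gumm_step Hi') _ (IH _); last exact: ltnW.
by apply: (ag_gumm_point (i := i.+1)); rewrite /= ltnW.
Qed.

Lemma gumm_chain_full : rcomp_alt (2 * n + 2) ab ag a c.
Proof.
case: gumm => _ [_ _ _ _ Hlast].
rewrite -[X in rcomp_alt _ _ _ X](Hlast A HA c (w n) a) addn2 mul2n -doubleS.
by apply: gumm_chain; rewrite /= leqnn.
Qed.

End GummChain.

Theorem proposition5p2 (S : signature) (V : variety S) (n : nat) :
  has_gumm_terms V n -> k_modular V (2 * n + 2).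
Proof.
move=> [p [j gumm]] A HA alpha beta gamma Calpha Cbeta Cgamma a c.
move=> [alpha_ac [d [beta_ad [e [alpha_gamma_de beta_ec]]]]].
exact: (gumm_chain_full gumm HA Calpha Cbeta Cgamma
  alpha_ac beta_ad alpha_gamma_de beta_ec).
Qed.
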